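(* Let $n>k\ge 1$ be integers, not both even, let $\alpha=\lceil n/2\rceil-\lfloor (n-k)/2\rfloor$ and $\beta=k-\alpha$, and let $G=\sqrt{n/k}\,W_n^H\Sigma W_k$. Let $1\le p\le n$ and let $G_{p\times k}$ be any $p\times k$ submatrix of $G$ formed by $p$ of its rows. Then the smallest eigenvalue of $G_{p\times k}G_{p\times k}^H$ is at most $1$ and the largest eigenvalue of $G_{p\times k}G_{p\times k}^H$ is at least $1$.
   Context: For a positive integer $l$, $W_l$ denotes the unitary $l\times l$ DFT matrix, $(W_l)_{r,s}=\frac{1}{\sqrt l}e^{-j2\pi(r-1)(s-1)/l}$, and $^H$ denotes conjugate transpose. $\Sigma$ is the $n\times k$ matrix $\begin{pmatrix} I_\alpha & 0\\ 0 & 0\\ 0 & I_\beta\end{pmatrix}$: its first $\alpha$ rows are $(I_\alpha\ 0)$, its last $\beta$ rows are $(0\ I_\beta)$, and its middle $n-k$ rows are zero. *)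

From HB Require Import structures.
From mathcomp Require Import all_boot all_order all_algebra.
From mathcomp Require Import reals trigo.
From mathcomp Require Import complex.
Set Implicit Arguments. Unset Strict Implicit. Unset Printing Implicit Defensive.
Import Order.TTheory GRing.Theory Num.Theory.
Local Open Scope ring_scope.


Definition mxH (R : realType) (m n : nat) (A : 'M[R[i]]_(m, n)) : 'M[R[i]]_(n, m) :=
  \matrix_(i < n, j < m) (A j i)^*%C.

(* unitary l x l DFT matrix, 0-indexed:
   (W_l)_{r,s} = l^{-1/2} exp(-j 2 pi r s / l) *)
Definition DFT_entry (R : realType) (l r s : nat) : R[i] :=
  ((Num.sqrt (l%:R : R))^-1)%:C%C *
  (let theta : R := 2 * pi * (r%:R) * (s%:R) / (l%:R) in
   ((cos theta) +i* (- sin theta))%C).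

Definition DFT (R : realType) (l : nat) : 'M[R[i]]_l :=
  \matrix_(r < l, s < l) DFT_entry R l r s.

Definition alpha (n k : nat) : nat := (n.+1)./2 - (n - k)./2.  (* ceil(n/2) - floor((n-k)/2) *)
Definition beta (n k : nat) : nat := k - alpha n k.

(* Sigma: first alpha rows (I_alpha 0), middle n-k rows zero, last beta rows (0 I_beta) *)
Definition Sigma (R : realType) (n k : nat) : 'M[R[i]]_(n, k) :=
  \matrix_(i < n, j < k)
    (if (((i < alpha n k)%N) && (j == i :> nat))
        || (((alpha n k + (n - k) <= i)%N) && ((j + (n - k))%N == i :> nat))
     then 1 else 0).

Definition Gmx (R : realType) (n k : nat) : 'M[R[i]]_(n, k) :=
  ((Num.sqrt ((n%:R : R) / (k%:R)))%:C%C) *: (mxH (DFT R n) *m Sigma R n k *m DFT R k).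

From HB Require Import structures.
From mathcomp Require Import all_boot all_order all_algebra.
From mathcomp Require Import reals trigo.
From mathcomp Require Import complex.
From mathcomp Require Import ring lra zify.

(* Every row of G has unit norm: since W_k is unitary,
   G G^H = (n/k) W_n^H Sigma Sigma^H W_n, and Sigma Sigma^H is the diagonal projection
   onto the k rows where Sigma has a 1, so each diagonal entry of G G^H is
   (n/k) * k * (1/n) = 1, every entry of W_n having modulus n^{-1/2}.  Hence
   M = G_p G_p^H has unit diagonal and trace p.  Being positive semidefinite, M has
   p nonnegative real eigenvalues (with multiplicity) summing to p, so one of them is
   at most 1 and another at least 1. *)

Set Implicit Arguments.
Unset Strict Implicit.
Unset Printing Implicit Defensive.
Import Order.TTheory GRing.Theory Num.Theory.
Local Open Scope ring_scope.

Lemma real_mean_witnesses (T : numDomainType) (s : seq T) (c : T) :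
  s != [::] -> {subset s <= Num.real} -> c \is Num.real ->
  \sum_(x <- s) x = c *+ size s ->
  (exists2 x, x \in s & x <= c) /\ (exists2 x, x \in s & c <= x).
Proof.
move=> s_nil s_real c_real sum_s.
have sum_c : \sum_(x <- s) c = c *+ size s.
  by rewrite big_const_seq count_predT; elim: (size s) => //= m ->; rewrite mulrS.
have has_s : has (mem s) s.
  apply/hasP; exists (nth c s 0%N); by apply: mem_nth; rewrite lt0n size_eq0.
split; apply/hasP/contraT => /hasPn s_cmp.
- suff : \sum_(x <- s) c < \sum_(x <- s) x by rewrite sum_c sum_s ltxx.
  rewrite big_seq [X in _ < X]big_seq; apply: ltr_sum => // x xs.
  by rewrite real_ltNge ?(s_real _ xs) //; apply: s_cmp.
- suff : \sum_(x <- s) x < \sum_(x <- s) c by rewrite sum_c sum_s ltxx.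
  rewrite big_seq [X in _ < X]big_seq; apply: ltr_sum => // x xs.
  by rewrite real_ltNge ?(s_real _ xs) //; apply: s_cmp.
Qed.

Lemma char_poly_spectrum (F : closedFieldType) p (M : 'M[F]_p) : (0 < p)%N ->
  exists rs : seq F, [/\ size rs = p, {in rs, forall z, eigenvalue M z}
                       & \sum_(z <- rs) z = \tr M].
Proof.
move=> p_gt0; have [rs def_chM] := closed_field_poly_normal (char_poly M).
rewrite (monicP (char_poly_monic M)) scale1r in def_chM.
have size_rs : size rs = p.
  by have := size_char_poly M; rewrite def_chM size_prod_XsubC => -[].
exists rs; split=> // [z|].
  by rewrite eigenvalue_root_char def_chM root_prod_XsubC.
apply: oppr_inj; rewrite -char_poly_trace // def_chM -{1}size_rs.
by rewrite coefPn_prod_XsubC // size_rs -lt0n.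
Qed.

Section ConjugateTranspose.
Variable R : realType.
Local Notation C := R[i].

Lemma conjc_realM (c : R) (z : C) : (c%:C * z)^*%C = c%:C%C * z^*%C.
Proof. by case: z => a b; simpc. Qed.

Lemma mxH_mul m n q (A : 'M[C]_(m, n)) (B : 'M[C]_(n, q)) :
  mxH (A *m B) = mxH B *m mxH A.
Proof.
apply/matrixP=> i j; rewrite !mxE rmorph_sum; apply: eq_bigr=> l _.
by rewrite !mxE rmorphM mulrC.
Qed.

Lemma mxHZ m n (c : C) (A : 'M[C]_(m, n)) : mxH (c *: A) = c^*%C *: mxH A.
Proof. by apply/matrixP=> i j; rewrite !mxE rmorphM. Qed.

Lemma rowsub_mulmx_mxH m n p (f : 'I_p -> 'I_m) (A : 'M[C]_(m, n)) i j :
  (rowsub f A *m mxH (rowsub f A)) i j = (A *m mxH A) (f i) (f j).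
Proof. by rewrite !mxE; apply: eq_bigr => l _; rewrite !mxE. Qed.

Lemma mulmx_mxH_ge0 n (v : 'rV[C]_n) : 0 <= (v *m mxH v) 0 0.
Proof. by rewrite mxE sumr_ge0 // => j _; rewrite mxE mulcJ_ge0. Qed.

Lemma mulmx_mxH_gt0 n (v : 'rV[C]_n) : v != 0 -> 0 < (v *m mxH v) 0 0.
Proof.
apply: contraNT; rewrite lt0r mulmx_mxH_ge0 andbT negbK mxE => /eqP.
have vv_ge0 j : true -> 0 <= v 0 j * mxH v j 0 by rewrite mxE mulcJ_ge0.
move/psumr_eq0P => /(_ vv_ge0) vv0; apply/eqP/rowP=> j; apply/eqP.
by have := vv0 j isT; rewrite !mxE => /eqP; rewrite mul_conjC_eq0.
Qed.

Lemma eigenvalue_gram_ge0 p k (A : 'M[C]_(p, k)) z :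
  eigenvalue (A *m mxH A) z -> 0 <= z.
Proof.
case/eigenvalueP=> v vM v_nz.
have vAvA : ((v *m A) *m mxH (v *m A)) 0 0 = z * (v *m mxH v) 0 0.
  by rewrite mxH_mul mulmxA -(mulmxA v) vM -scalemxAl mxE.
rewrite -(pmulr_lge0 _ (mulmx_mxH_gt0 v_nz)) -vAvA; exact: mulmx_mxH_ge0.
Qed.

Lemma gram_eigenvalues_about_mean p k (A : 'M[C]_(p, k)) (c : R) :
  (0 < p)%N -> \tr (A *m mxH A) = (c *+ p)%:C%C ->
  (exists lam : R, eigenvalue (A *m mxH A) lam%:C%C /\ lam <= c) /\
  (exists lam : R, eigenvalue (A *m mxH A) lam%:C%C /\ c <= lam).
Proof.
move=> p_gt0 trA.
have [rs [size_rs rs_eig sum_rs]] := char_poly_spectrum (A *m mxH A) p_gt0.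
have rs_real : {subset rs <= Num.real}.
  by move=> z /rs_eig /eigenvalue_gram_ge0; apply: ger0_real.
have [] := @real_mean_witnesses _ rs c%:C%C.
- by rewrite -size_eq0 size_rs -lt0n.
- exact: rs_real.
- by rewrite realE !lecR le_total.
- by rewrite sum_rs trA size_rs rmorphMn.
move=> [z zs zc] [z' z's cz']; split;
  [exists (complex.Re z) | exists (complex.Re z')];
  by rewrite -lecR RRe_real ?rs_real ?rs_eig.
Qed.

End ConjugateTranspose.

Section DFT.
Variable R : realType.
Local Notation C := R[i].

Definition expNi (x : R) : C := (cos x +i* (- sin x))%C.

Lemma expNiD x y : expNi (x + y) = expNi x * expNi y.
Proof.
rewrite /expNi cosD sinD; simpc; apply/eqP.
by rewrite eq_complex /=; apply/andP; split; apply/eqP; ring.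
Qed.

Lemma expNi0 : expNi 0 = 1.
Proof. by rewrite /expNi cos0 sin0 oppr0. Qed.

Lemma conj_expNi x : (expNi x)^*%C = expNi (- x).
Proof. by rewrite /expNi /conjc cosN sinN. Qed.

Lemma expNiMn x m : expNi (x *+ m) = expNi x ^+ m.
Proof. by elim: m => [|m IHm]; rewrite ?expNi0 // mulrS expNiD IHm exprS. Qed.

Lemma expNi_2piMn m : expNi (pi *+ 2 *+ m) = 1.
Proof. by rewrite expNiMn /expNi cos2pi sin2pi oppr0 expr1n. Qed.

Lemma expNi_neq1 x : 0 < `|x| < pi *+ 2 -> expNi x != 1.
Proof.
case/andP=> x_gt0 x_lt2pi; apply/negP=> /eqP [cosx1 _].
have sin_half_gt0 : 0 < sin (`|x| / 2).
  by apply: sin_gt0_pi; rewrite divr_gt0 //= ltr_pdivrMr // mulr_natr.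
have : cos (`|x| / 2 *+ 2%N) = 1.
  by rewrite -mulr_natr mulfVK ?pnatr_eq0 // cos_norm.
rewrite cos_mulr2n cos2sin2 => cos_eq.
have /eqP : sin (`|x| / 2) ^+ 2%N = 0 by lra.
by rewrite sqrf_eq0 gt_eqF.
Qed.

Lemma sum_expr_root1 (F : idomainType) (z : F) l :
  z ^+ l = 1 -> z != 1 -> \sum_(i < l) z ^+ i = 0.
Proof.
case: l => [|l] zl z_neq1; first by rewrite big_ord0.
by apply/eqP; move/eqP: zl; rewrite expfS_eq1 (negbTE z_neq1).
Qed.

Lemma ord_dist_bounds (T : realFieldType) l (r r' : 'I_l) :
  r != r' -> 0 < `|(r%:R : T) - r'%:R| < l%:R.
Proof.
move=> r_neq_r'; rewrite normr_gt0 subr_eq0 eqr_nat val_eqE r_neq_r' ltr_distlC.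
have [r_ge0 r'_ge0] := (ler0n T r, ler0n T r').
have [r_lt r'_lt] : (r%:R < l%:R :> T) /\ (r'%:R < l%:R :> T) by rewrite !ltr_nat.
by apply/andP; split; lra.
Qed.

Lemma DFT_entry_mul_conj l r r' s : (0 < l)%N ->
  DFT_entry R l r s * (DFT_entry R l r' s)^*%C =
  (l%:R^-1)%:C%C * expNi (2 * pi * (r%:R - r'%:R) / l%:R) ^+ s.
Proof.
move=> l_gt0; rewrite /DFT_entry -/(expNi _) -/(expNi _) conjc_realM.
rewrite conj_expNi mulrACA -rmorphM -invfM -expr2 sqr_sqrtr ?ler0n //.
rewrite -expNiD -expNiMn; congr (_ * expNi _).
by rewrite -mulr_natr; field; rewrite pnatr_eq0 -lt0n.
Qed.

Lemma DFT_unitary l : (0 < l)%N -> DFT R l *m mxH (DFT R l) = 1%:M.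
Proof.
move=> l_gt0; have l_neq0 : (l%:R : R) != 0 by rewrite pnatr_eq0 -lt0n.
apply/matrixP=> r r'; rewrite !mxE.
under eq_bigr => s _ do rewrite !mxE DFT_entry_mul_conj //.
rewrite -mulr_sumr; have [<-|r_neq_r'] := eqVneq r r'.
  under eq_bigr do rewrite subrr mulr0 mul0r expNi0 expr1n.
  by rewrite sumr_const card_ord -rmorphMn -rmorphM mulr1n mulVf.
rewrite sum_expr_root1 ?mulr0 //.
  rewrite -expNiMn.
  have -> : 2 * (pi : R) * ((r : nat)%:R - (r' : nat)%:R) / l%:R *+ l
      = pi *+ 2 *+ r - pi *+ 2 *+ r'.
    by rewrite -(mulr_natr _ l) -!(mulr_natr (pi *+ 2)) -(mulr_natr pi 2); field.
  by rewrite expNiD -conj_expNi !expNi_2piMn conjc1 mulr1.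
have /andP[d_gt0 d_lt] := ord_dist_bounds R r_neq_r'.
apply: expNi_neq1; rewrite !normrM normfV !normr_nat ger0_norm ?pi_ge0 //.
rewrite divr_gt0 ?mulr_gt0 ?ltr0n ?pi_gt0 //= ltr_pdivrMr ?ltr0n //.
by have := pi_gt0 R; nra.
Qed.
End DFT.

Section Sigma.
Variables (R : realType) (n k : nat).
Hypothesis k_le_n : (k <= n)%N.

Fact Sigma_row_subproof (j : 'I_k) :
  ((if (j < alpha n k)%N then j : nat else j + (n - k)) < n)%N.
Proof. by have := ltn_ord j; case: ifP; lia. Qed.

Definition Sigma_row (j : 'I_k) : 'I_n := Ordinal (Sigma_row_subproof j).

Lemma Sigma_entry (i : 'I_n) (j : 'I_k) : Sigma R n k i j = (i == Sigma_row j)%:R.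
Proof.
rewrite mxE -val_eqE /=; set b := (_ || _).
suff -> : b = ((i : nat) == if (j < alpha n k)%N then j : nat else (j + (n - k))%N).
  by case: (_ == _).
rewrite /b; have := ltn_ord j.
by case: ifP => j_alpha j_lt_k; apply/idP/idP; lia.
Qed.

Lemma mxH_DFT_mul_Sigma (r : 'I_n) (j : 'I_k) :
  (mxH (DFT R n) *m Sigma R n k) r j = (DFT_entry R n (Sigma_row j) r)^*%C.
Proof.
rewrite mxE (bigD1 (Sigma_row j)) //= Sigma_entry eqxx mulr1 big1 ?addr0.
  by rewrite !mxE.
by move=> i /negbTE i_neq; rewrite Sigma_entry i_neq mulr0.
Qed.

End Sigma.

Section Gmx.
Variables (R : realType) (n k : nat).
Hypotheses (k_gt0 : (0 < k)%N) (k_le_n : (k <= n)%N).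

Lemma Gmx_mxH_diag (r : 'I_n) : (Gmx R n k *m mxH (Gmx R n k)) r r = 1.
Proof.
have n_gt0 : (0 < n)%N by apply: leq_trans k_le_n.
have [n_neq0 k_neq0] : (n%:R : R) != 0 /\ (k%:R : R) != 0.
  by rewrite !pnatr_eq0 -!lt0n.
rewrite /Gmx mxHZ -scalemxAl -scalemxAr scalerA mxH_mul mulmxA.
rewrite -(mulmxA _ (DFT R k)) DFT_unitary // mulmx1 !mxE.
under eq_bigr => j _ do
  rewrite [mxH _ j r]mxE mxH_DFT_mul_Sigma // conjcK mulrC DFT_entry_mul_conj //
    subrr mulr0 mul0r expNi0 expr1n mulr1.
rewrite sumr_const card_ord conjc_real -rmorphM -rmorphMn -rmorphM.
rewrite -expr2 sqr_sqrtr ?divr_ge0 ?ler0n // -(mulr_natr n%:R^-1).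
have -> : n%:R / k%:R * (n%:R^-1 * k%:R) = 1 :> R by field; rewrite n_neq0 k_neq0.
exact: rmorph1.
Qed.

End Gmx.

Theorem theorem1 (R : realType) (n k p : nat) (f : 'I_p -> 'I_n) :
  (1 <= k)%N -> (k < n)%N -> ~~ (~~ odd n && ~~ odd k) ->
  (1 <= p)%N -> (p <= n)%N -> injective f ->
  let Gp := rowsub f (Gmx R n k) in
  let M := Gp *m mxH Gp in
  (exists lam : R, eigenvalue M lam%:C%C /\ lam <= 1) /\
  (exists lam : R, eigenvalue M lam%:C%C /\ 1 <= lam).
Proof.
move=> k_gt0 k_lt_n _ p_gt0 _ _ Gp M.
apply: (gram_eigenvalues_about_mean (c := 1)) => //.
rewrite rmorph_nat -[p in RHS]card_ord -sumr_const; apply: eq_bigr => i _.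
by rewrite rowsub_mulmx_mxH Gmx_mxH_diag // ltnW.
Qed.
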